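(* Assume $D=\sum_{k=1}^K N_k$ (i.e. $\sum_k N_k\le N_T$). Let $\mathcal G$ be a graph on $N_I$ vertices for which there exists a permutation matrix $\mathbf P$ with $\mathbf A_{\mathcal G}=\mathbf P\bar{\mathbf A}_{\mathcal G}\mathbf P^T$ and $\sum_{m=n+1}^{N_I}\bar{\mathbf A}_{\mathcal G}(n,m)=\min\{2L-1,N_I-n\}$ for $1\le n\le N_I-1$. Then $$\mathcal U_{\mathrm{fully}}=\mathcal U_{\mathcal G}\cup\mathcal N_{\mathcal U}.$$ Consequently $\mathcal H_{\mathrm{fully}}=\mathcal H_{\mathcal G}\cup\mathcal N$, where $\mathcal H_{\mathrm{fully}}=\{\mathbf H_d+\mathbf U^H\mathbf G:\mathbf U\in\mathcal U_{\mathrm{fully}}\}$, $\mathcal H_{\mathcal G}=\{\mathbf H_d+\mathbf U^H\mathbf G:\mathbf U\in\mathcal U_{\mathcal G}\}$ and $\mathcal N=\{\mathbf H_d+\mathbf U^H\mathbf G:\mathbf U\in\mathcal N_{\mathcal U}\}$.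
   Context: Let $N_I,N_T,K\ge1$, $N_1,\dots,N_K\ge1$ be integers, $Z_0>0$, and let $\mathbf H_{d,k}\in\mathbb C^{N_k\times N_T}$, $\mathbf H_{r,k}\in\mathbb C^{N_k\times N_I}$, $\mathbf G\in\mathbb C^{N_I\times N_T}$ be given. Let $\mathbf H_d$ and $\mathbf H_r\in\mathbb C^{(\sum_k N_k)\times N_I}$ be the vertical stackings of the $\mathbf H_{d,k}$ and of the $\mathbf H_{r,k}$, respectively. $D=\min\{\sum_k N_k,N_T\}$, $L=\min\{D,N_I/2\}$. A graph $\mathcal G=(\mathcal V,\mathcal E)$ is a simple undirected graph with vertices $V_1,\dots,V_{N_I}$; its adjacency matrix $\mathbf A_{\mathcal G}$ is the symmetric $0$–$1$ matrix with zero diagonal and $\mathbf A_{\mathcal G}(n,m)=1$ iff $(V_n,V_m)\in\mathcal E$; $\mathcal B_{\mathcal G}=\{\mathbf B\in\mathbb R^{N_I\times N_I}: B_{n,m}=0\ \forall n\ne m \text{ with }(V_n,V_m)\notin\mathcal E\}$. Define $\mathcal U_{\mathrm{fully}}=\{(\mathbf H_r\boldsymbol\Theta)^H : \boldsymbol\Theta=(\mathbf I+\mathsf iZ_0\mathbf B)^{-1}(\mathbf I-\mathsf iZ_0\mathbf B),\ \mathbf B\in\mathbb R^{N_I\times N_I},\ \mathbf B=\mathbf B^T\}$ and $\mathcal U_{\mathcal G}$ the same set with the additional constraint $\mathbf B\in\mathcal B_{\mathcal G}$. For $\mathbf U\in\mathbb C^{N_I\times\sum_k N_k}$ let $\mathbf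 M_{\mathbf U}=[\mathcal R(\mathsf iZ_0(\mathbf H_r^H+\mathbf U))\ \ \mathcal I(\mathsf iZ_0(\mathbf H_r^H+\mathbf U))]\in\mathbb R^{N_I\times 2\sum_k N_k}$, where $\mathcal R,\mathcal I$ denote entrywise real and imaginary parts, and let $\mathcal N_{\mathcal U}=\{\mathbf U\in\mathcal U_{\mathrm{fully}}:\ \mathbf M_{\mathbf U}\text{ has a singular } n\times n \text{ submatrix for some } n\le 2\sum_k N_k\}$. *)

From HB Require Import structures.
From mathcomp Require Import all_boot all_order all_fingroup all_algebra.
From mathcomp Require Import reals.
From mathcomp.real_closed Require Import complex.
Set Implicit Arguments. Unset Strict Implicit. Unset Printing Implicit Defensive.
Import Order.TTheory GRing.Theory Num.Theory.
Local Open Scope ring_scope.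

Section RISDefs.
Variable R : realType.
Local Notation C := R[i].

Definition conjT m n (A : 'M[C]_(m, n)) : 'M[C]_(n, m) := (map_mx (@conjc R) A)^T.

Definition cplx_mx m n (A : 'M[R]_(m, n)) : 'M[C]_(m, n) := map_mx (fun x => x%:C%C) A.

Definition Theta NI (Z0 : R) (B : 'M[R]_NI) : 'M[C]_NI :=
  invmx (1%:M + ('i%C * Z0%:C%C) *: cplx_mx B) *m (1%:M - ('i%C * Z0%:C%C) *: cplx_mx B).

Definition stack K (N : 'I_K -> nat) p (H : forall k : 'I_K, 'M[C]_(N k, p))
  : 'M[C]_(\sum_(k < K) N k, p) := \mxcol_(k < K) H k.

Definition in_BG NI (e : rel 'I_NI) (B : 'M[R]_NI) : Prop :=
  forall n m : 'I_NI, n != m -> ~~ e n m -> B n m = 0.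

(* adjacency matrix of the graph given by the (symmetric, irreflexive) relation e *)
Definition adjmx NI (e : rel 'I_NI) : 'M[R]_NI := \matrix_(n, m) (e n m)%:R.

Definition U_fully NI S (Z0 : R) (Hr : 'M[C]_(S, NI)) (U : 'M[C]_(NI, S)) : Prop :=
  exists B : 'M[R]_NI, B^T = B /\ U = conjT (Hr *m Theta Z0 B).

Definition U_G NI S (e : rel 'I_NI) (Z0 : R) (Hr : 'M[C]_(S, NI)) (U : 'M[C]_(NI, S)) : Prop :=
  exists B : 'M[R]_NI, B^T = B /\ in_BG e B /\ U = conjT (Hr *m Theta Z0 B).

Definition M_U NI S (Z0 : R) (Hr : 'M[C]_(S, NI)) (U : 'M[C]_(NI, S)) : 'M[R]_(NI, S + S) :=
  let X := ('i%C * Z0%:C%C) *: (conjT Hr + U) in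
  row_mx (map_mx (@complex.Re R) X) (map_mx (@complex.Im R) X).

Definition has_singular_submx m p (bound : nat) (M : 'M[R]_(m, p)) : Prop :=
  exists n : nat, (n <= bound)%N /\
    exists (f : 'I_n -> 'I_m) (g : 'I_n -> 'I_p),
      injective f /\ injective g /\ \det (mxsub f g M) = 0.

Definition N_U NI S (Z0 : R) (Hr : 'M[C]_(S, NI)) (U : 'M[C]_(NI, S)) : Prop :=
  U_fully Z0 Hr U /\ has_singular_submx (S + S) (M_U Z0 Hr U).

Definition Hset NI NT S (Hd : 'M[C]_(S, NT)) (G : 'M[C]_(NI, NT))
  (P : 'M[C]_(NI, S) -> Prop) (H : 'M[C]_(S, NT)) : Prop :=
  exists U, P U /\ H = Hd + conjT U *m G.

End RISDefs.

From HB Require Import structures.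
From mathcomp Require Import all_boot all_order all_fingroup all_algebra.
From mathcomp Require Import reals.
From mathcomp.real_closed Require Import complex.
From mathcomp Require Import zify.
From Stdlib Require Import Classical.
Import Order.TTheory GRing.Theory Num.Theory.
Set Implicit Arguments. Unset Strict Implicit. Unset Printing Implicit Defensive.
Local Open Scope ring_scope.

(* If U = (H_r Theta(B))^H with B real symmetric, the Cayley transform gives
   U^H (I + i Z0 B) = H_r (I - i Z0 B); a second real symmetric B' yields the
   same U exactly when B' - B kills H_r^H + U, i.e. when B' M_U = B M_U, the two
   halves of M_U being the real and imaginary parts.  So it suffices to find a
   symmetric B' supported on the graph with B' M_U = B M_U.  After relabelling
   by P, every vertex n has min(2L - 1, N_I - n) neighbours among the later
   vertices.  Row n of B' is solved from row n of B' M_U = B M_U: its unknowns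
   are the diagonal entry and the entries at these neighbours, and when there
   are 2S of them the matching rows of M_U form a nonsingular 2S x 2S block
   unless U lies in N_U.  Symmetry then fixes column n, and the remaining system
   on the later vertices has the same symmetric form. *)

Definition upper_nbhd n (e : rel 'I_n) (i : 'I_n) : {set 'I_n} :=
  [set j : 'I_n | (i < j)%N && e i j].

Lemma card_ord_gt n (i : 'I_n) : #|[set j : 'I_n | (i < j)%N]| = (n - i.+1)%N.
Proof.
rewrite -sum1dep_card -(big_mkord (fun j => i < j)%N (fun _ => 1%N)) sum1_count.
rewrite /index_iota subn0 -[n in iota _ n](subnKC (ltn_ord i)) iotaD count_cat add0n.
rewrite (@eq_in_count _ _ pred0) ?count_pred0 => [|j]; last first.
  by rewrite mem_iota add0n ltnS => /andP[_ le_ji]; apply/negbTE; rewrite -leqNgt.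
rewrite (@eq_in_count _ _ predT) ?count_predT ?size_iota // => j.
by rewrite mem_iota => /andP[].
Qed.

Lemma full_upper_nbhd n (e : rel 'I_n) (i j : 'I_n) :
  #|upper_nbhd e i| = (n - i.+1)%N -> (i < j)%N -> e i j.
Proof.
move=> card_i lt_ij.
have sub : upper_nbhd e i \subset [set j : 'I_n | (i < j)%N].
  by apply/subsetP => k; rewrite !inE => /andP[].
have := subset_cardP (etrans card_i (esym (card_ord_gt i))) sub j.
by rewrite !inE lt_ij /= => ->.
Qed.

Lemma in_BG_complete (R : realType) n (e : rel 'I_n) (B : 'M[R]_n) :
  symmetric e -> (forall i, #|upper_nbhd e i| = (n - i.+1)%N) -> in_BG e B.
Proof.
move=> e_sym full i j.
case: (ltngtP i j) => [lt_ij|lt_ji|/val_inj->]; last by rewrite eqxx.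
- by rewrite (full_upper_nbhd (full i) lt_ij).
- by rewrite e_sym (full_upper_nbhd (full j) lt_ji).
Qed.

Lemma card_upper_nbhd_rshift n (e : rel 'I_(1 + n)) (i : 'I_n) :
  #|upper_nbhd (fun a b => e (rshift 1 a) (rshift 1 b)) i| =
  #|upper_nbhd e (rshift 1 i)|.
Proof.
rewrite -(card_imset _ (@rshift_inj 1 n)); apply: eq_card => j.
rewrite inE; case: (split_ordP j) => k ->.
- rewrite ord1 /=; apply/negbTE/imsetP => -[x _ /eqP].
  by rewrite eq_lrshift.
- by rewrite mem_imset ?inE //; exact: rshift_inj.
Qed.

Lemma exists_inj_in_set (T : finType) (A : {set T}) p :
  #|A| = p -> exists f : 'I_p -> T, injective f /\ forall k, f k \in A.
Proof.
move=> card_A; exists (fun k => enum_val (cast_ord (esym card_A) k)).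
by split=> [a b /enum_val_inj /cast_ord_inj|k] //; exact: enum_valP.
Qed.

Lemma row_solution_in_codom (F : fieldType) n p (M : 'M[F]_(n, p))
    (f : 'I_p -> 'I_n) (y : 'rV_p) :
  \det (mxsub f id M) != 0 ->
  exists2 r : 'rV_n, r *m M = y & forall j, j \notin codom f -> r 0 j = 0.
Proof.
move=> nsing; have unit_Mf : mxsub f id M \in unitmx by rewrite unitmxE unitfE.
exists (y *m invmx (mxsub f id M) *m rowsub f 1%:M).
  by rewrite -mulmxA -rowsubE mulmxKV.
move=> j j_f; rewrite mxE big1 // => k _; rewrite !mxE.
by case: eqP => [fk_j|]; [case/codomP: j_f; exists k | rewrite mulr0].
Qed.

Lemma first_row_solution (F : fieldType) n q (e : rel 'I_n.+1)
    (M : 'M[F]_(n.+1, q.+1)) (y : 'rV_q.+1) :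
  #|upper_nbhd e ord0| = q ->
  (forall f : 'I_q.+1 -> 'I_n.+1, injective f -> \det (mxsub f id M) != 0) ->
  exists2 r : 'rV_n.+1, r *m M = y & forall j, j != ord0 -> ~~ e ord0 j -> r 0 j = 0.
Proof.
move=> card_nbhd nsing.
have card_A : #|ord0 |: upper_nbhd e ord0| = q.+1.
  by rewrite cardsU1 card_nbhd inE ltnn.
have [f [f_inj f_A]] := exists_inj_in_set card_A.
have [r rM r_supp] := row_solution_in_codom y (nsing f f_inj).
exists r => // j j0 not_e; apply: r_supp; apply/codomP => -[k fk].
by have := f_A k; rewrite -fk !inE (negbTE j0) (negbTE not_e) andbF.
Qed.

Lemma trmx11 (T : Type) (a : 'M[T]_1) : a^T = a.
Proof. by apply/matrixP => i j; rewrite !ord1 mxE. Qed.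

Lemma sym_solution_square (F : fieldType) n (M Y : 'M[F]_n) :
  M \in unitmx -> (M^T *m Y)^T = M^T *m Y -> (Y *m invmx M)^T = Y *m invmx M.
Proof.
move=> unit_M symMY.
have trY : Y^T = M^T *m Y *m invmx M by rewrite -symMY trmx_mul trmxK mulmxK.
by rewrite trmx_mul trmx_inv trY -!mulmxA mulKmx ?unitmx_tr.
Qed.

Section BlockSolution.
Variables (K : comRingType) (n p : nat).
Variables (a : 'M[K]_1) (r : 'rV[K]_n) (M Y : 'M[K]_(1 + n, p)).
Hypothesis rM : row_mx a r *m M = usubmx Y.

Let rM_split : a *m usubmx M + r *m dsubmx M = usubmx Y.
Proof. by rewrite -mul_row_col vsubmxK. Qed.

Lemma sym_residual :
  (M^T *m Y)^T = M^T *m Y ->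
  ((dsubmx M)^T *m (dsubmx Y - r^T *m usubmx M))^T =
  (dsubmx M)^T *m (dsubmx Y - r^T *m usubmx M).
Proof.
move=> symMY.
set m0 := usubmx M; set M' := dsubmx M; set Y1 := dsubmx Y.
set P := M'^T *m Y1; set T := m0^T *m (r *m M').
have splitMY : M^T *m Y = m0^T *m (a *m m0) + T + P.
  rewrite -{1}(vsubmxK M) -{1}(vsubmxK Y) tr_col_mx mul_row_col -rM_split.
  by rewrite mulmxDr mulmxA.
have sym_a : (m0^T *m (a *m m0))^T = m0^T *m (a *m m0).
  by rewrite !trmx_mul trmxK trmx11 mulmxA.
have symTP : T^T + P^T = T + P.
  by move: symMY; rewrite splitMY !raddfD /= sym_a -!addrA => /addrI.
have trT : M'^T *m (r^T *m m0) = T^T by rewrite /T !trmx_mul trmxK mulmxA.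
rewrite mulmxBr trT raddfB /= trmxK.
have -> : P^T = T + P - T^T by rewrite -symTP addrC addKr.
by rewrite addrC !addrA addNr add0r.
Qed.

Lemma block_solution (B' : 'M[K]_n) :
  B' *m dsubmx M = dsubmx Y - r^T *m usubmx M ->
  block_mx a r r^T B' *m M = Y.
Proof.
move=> B'M; rewrite -[in LHS](vsubmxK M) mul_block_col rM_split B'M.
by rewrite addrC subrK vsubmxK.
Qed.

End BlockSolution.

Lemma in_BG_block (R : realType) n (e : rel 'I_(1 + n)) (r : 'rV[R]_(1 + n))
    (B' : 'M[R]_n) :
  symmetric e ->
  (forall j, j != ord0 -> ~~ e ord0 j -> r 0 j = 0) ->
  in_BG (fun a b => e (rshift 1 a) (rshift 1 b)) B' ->
  in_BG e (block_mx (lsubmx r) (rsubmx r) (rsubmx r)^T B').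
Proof.
move=> e_sym r_supp B'_BG i j.
have l0 : lshift n 0 = ord0 :> 'I_(1 + n) by apply: val_inj.
case: (split_ordP i) => a ->; case: (split_ordP j) => b ->; rewrite ?ord1.
- by rewrite eqxx.
- by rewrite block_mxEur mxE l0 => _; apply: r_supp.
- by rewrite block_mxEdl !mxE l0 e_sym => _; apply: r_supp.
- rewrite block_mxEdr => ab; apply: B'_BG.
  by apply: contraNneq ab => ->.
Qed.

Lemma sparse_sym_solution (R : realType) q n (e : rel 'I_n) (M Y : 'M[R]_(n, q.+1)) :
  (q < n)%N -> symmetric e ->
  (forall i, #|upper_nbhd e i| = minn q (n - i.+1)) ->
  (forall f : 'I_q.+1 -> 'I_n, injective f -> \det (mxsub f id M) != 0) ->
  (M^T *m Y)^T = M^T *m Y ->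
  exists B : 'M[R]_n, B^T = B /\ in_BG e B /\ B *m M = Y.
Proof.
elim: n e M Y => [//|n IH] e M Y lt_qn e_sym card_nbhd nsing symMY.
have [eq_qn|{lt_qn}lt_qn] : q = n \/ (q < n)%N by lia.
  subst q; have unit_M : M \in unitmx.
    by rewrite unitmxE unitfE -(mxsub_id M); apply: nsing.
  exists (Y *m invmx M); split; [|split]; first exact: sym_solution_square.
  - apply: in_BG_complete => // i; rewrite card_nbhd subSS.
    by apply/minn_idPr; apply: leq_subr.
  - by rewrite mulmxKV.
pose M1 : 'M_(1 + n, q.+1) := M; pose Y1 : 'M_(1 + n, q.+1) := Y.
pose e1 : rel 'I_n := fun a b => e (rshift 1 a) (rshift 1 b).
have card_nbhd0 : #|upper_nbhd e ord0| = q.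
  by rewrite card_nbhd subn1; apply/minn_idPl; apply: ltnW.
have [r rM r_supp] := first_row_solution (usubmx Y1) card_nbhd0 nsing.
pose a := lsubmx (r : 'rV_(1 + n)); pose r1 := rsubmx (r : 'rV_(1 + n)).
have r1M : row_mx a r1 *m M1 = usubmx Y1 by rewrite hsubmxK.
have card_nbhd1 i : #|upper_nbhd e1 i| = minn q (n - i.+1).
  by rewrite card_upper_nbhd_rshift card_nbhd subSS.
have nsing1 f : injective f -> \det (mxsub f id (dsubmx M1)) != 0.
  move=> f_inj; have -> : mxsub f id (dsubmx M1) = mxsub (@rshift 1 n \o f) id M.
    by apply/matrixP => i j; rewrite !mxE.
  by apply: nsing; apply: inj_comp f_inj; exact: (@rshift_inj 1 n).
have [B' [symB' [B'_BG B'M]]] := IH e1 _ _ lt_qn (fun a b => e_sym _ _)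
  card_nbhd1 nsing1 (sym_residual r1M symMY).
exists (block_mx a r1 r1^T B'); split; [|split].
- by rewrite (@tr_block_mx _ 1 n 1 n) trmxK symB' trmx11.
- exact: in_BG_block.
- exact: block_solution.
Qed.

Lemma sparse_sym_mulmx_eq (R : realType) n p (e : rel 'I_n) (M : 'M[R]_(n, p))
    (B0 : 'M[R]_n) :
  (0 < p)%N -> symmetric e -> B0^T = B0 ->
  (forall i, #|upper_nbhd e i| = minn (minn p n).-1 (n - i.+1)) ->
  ((p <= n)%N -> forall f : 'I_p -> 'I_n, injective f -> \det (mxsub f id M) != 0) ->
  exists B : 'M[R]_n, B^T = B /\ in_BG e B /\ B *m M = B0 *m M.
Proof.
case: p M => [//|q] M _ e_sym symB0 card_nbhd nsing.
have [lt_qn|le_nq] := ltnP q n.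
  apply: sparse_sym_solution => //.
  - by move=> i; rewrite card_nbhd; congr minn; lia.
  - exact: nsing.
  - by rewrite !trmx_mul trmxK symB0 mulmxA.
exists B0; split=> //; split=> //; apply: in_BG_complete => // i.
by rewrite card_nbhd; have := ltn_ord i; lia.
Qed.

(* The paper's condition on the adjacency matrix, with [d = 2L - 1]. *)
Definition upper_degrees_up_to_perm (R : realType) n (e : rel 'I_n) (d : nat) : Prop :=
  exists (s : 'S_n) (Abar : 'M[R]_n),
    adjmx R e = perm_mx s *m Abar *m (perm_mx s)^T /\
    forall i : 'I_n, (i.+1 <= n - 1)%N ->
      \sum_(m : 'I_n | (i < m)%N) Abar i m = (minn d (n - i.+1))%:R.

Lemma adjmx_conj_permE (R : realType) n (e : rel 'I_n) (s : 'S_n) (A : 'M[R]_n) :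
  adjmx R e = perm_mx s *m A *m (perm_mx s)^T ->
  forall a b, A a b = (e ((s^-1)%g a) ((s^-1)%g b))%:R.
Proof.
move=> eA a b; have := congr1 (fun B : 'M[R]_n => B ((s^-1)%g a) ((s^-1)%g b)) eA.
by rewrite /adjmx tr_perm_mx -row_permE -col_permE !mxE !permKV => ->.
Qed.

Lemma card_upper_nbhd_perm (R : realType) n (e : rel 'I_n) d :
  upper_degrees_up_to_perm R e d ->
  exists s : 'S_n, forall i,
    #|upper_nbhd (fun a b => e ((s^-1)%g a) ((s^-1)%g b)) i| = minn d (n - i.+1).
Proof.
move=> [s [A [eA row_sums]]]; exists s => i.
have [lt_i|le_i] := ltnP i.+1 n; last first.
  have -> : (n - i.+1 = 0)%N by lia.
  rewrite minn0; apply: eq_card0 => j; rewrite inE.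
  case: (ltnP i j) => [lt_ij|//]; have := ltn_ord j; lia.
apply/eqP; rewrite -(eqr_nat R) -row_sums; last by lia.
rewrite -sum1dep_card natr_sum big_mkcondr /=; apply/eqP/eq_bigr => j _.
by rewrite (adjmx_conj_permE eA); case: (e _ _).
Qed.

Lemma in_BG_conj_perm (R : realType) n (e : rel 'I_n) (s : 'S_n) (B : 'M[R]_n) :
  in_BG (fun a b => e ((s^-1)%g a) ((s^-1)%g b)) B ->
  in_BG e (col_perm s (row_perm s B)).
Proof.
move=> B_BG i j ij not_e; rewrite !mxE; apply: B_BG.
- by rewrite (inj_eq perm_inj).
- by rewrite !permK.
Qed.

Lemma sparse_sym_mulmx_eq_perm (R : realType) n p (e : rel 'I_n)
    (M : 'M[R]_(n, p)) (B0 : 'M[R]_n) :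
  (0 < p)%N -> symmetric e -> B0^T = B0 ->
  upper_degrees_up_to_perm R e (minn p n).-1 ->
  ((p <= n)%N -> forall f : 'I_p -> 'I_n, injective f -> \det (mxsub f id M) != 0) ->
  exists B : 'M[R]_n, B^T = B /\ in_BG e B /\ B *m M = B0 *m M.
Proof.
move=> p_gt0 e_sym symB0 /card_upper_nbhd_perm[s card_nbhd] nsing.
pose Ms := row_perm (s^-1)%g M; pose B0s := col_perm (s^-1)%g (row_perm (s^-1)%g B0).
have symB0s : B0s^T = B0s.
  by apply/matrixP => a b; rewrite !mxE -[in LHS]symB0 mxE.
have nsing_s : (p <= n)%N -> forall f, injective f -> \det (mxsub f id Ms) != 0.
  move=> le_pn f f_inj.
  have -> : mxsub f id Ms = mxsub ((s^-1)%g \o f) id M.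
    by apply/matrixP => a b; rewrite !mxE.
  by apply: nsing => //; apply: inj_comp f_inj; exact: perm_inj.
have [B' [symB' [B'_BG B'M]]] :=
  sparse_sym_mulmx_eq p_gt0 (fun a b => e_sym _ _) symB0s card_nbhd nsing_s.
exists (col_perm s (row_perm s B')); split; [|split].
- by apply/matrixP => a b; rewrite !mxE -[in LHS]symB' mxE.
- exact: in_BG_conj_perm.
- move: B'M; rewrite /Ms /B0s !row_permE !col_permE invgK => B'M.
  rewrite -!mulmxA B'M !mulmxA -perm_mxM mulgV perm_mx1 mul1mx.
  by rewrite -!mulmxA [perm_mx s *m _]mulmxA -perm_mxM mulgV perm_mx1 mul1mx.
Qed.

Lemma unitmx_1_add_mul_tr (R : realFieldType) n m (A : 'M[R]_(n, m)) :
  1%:M + A *m A^T \in unitmx.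
Proof.
have sqr_norm k (u : 'rV[R]_k) : (u *m u^T) 0 0 = \sum_j u 0 j ^+ 2.
  by rewrite mxE; apply: eq_bigr => j _; rewrite mxE expr2.
have sqr_norm_ge0 k (u : 'rV[R]_k) : 0 <= (u *m u^T) 0 0.
  by rewrite sqr_norm sumr_ge0 // => j _; exact: sqr_ge0.
rewrite unitmxE unitfE; apply/negP => /det0P[v v_neq0 vA].
have : (v *m v^T + (v *m A) *m (v *m A)^T) 0 0 = 0.
  by rewrite trmx_mul !mulmxA -mulmxDl -mulmxA -{1}[v]mulmx1 -mulmxDr vA mul0mx mxE.
rewrite mxE => /eqP; rewrite paddr_eq0 ?sqr_norm_ge0 // => /andP[/eqP vv _].
move: vv; rewrite sqr_norm => /psumr_eq0P vv.
move/eqP: v_neq0; apply; apply/rowP => j; rewrite mxE.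
by apply/eqP; rewrite -sqrf_eq0 vv // => i _; exact: sqr_ge0.
Qed.

Lemma invmx_comm (F : comUnitRingType) n (P Q : 'M[F]_n) :
  P \in unitmx -> P *m Q = Q *m P -> invmx P *m Q = Q *m invmx P.
Proof.
move=> unit_P PQ; apply: (canRL (mulmxK unit_P)).
by rewrite -mulmxA -PQ mulmxA mulVmx ?mul1mx.
Qed.

Lemma cayley_shift (K : comRingType) m n (a : K) (H X : 'M[K]_(m, n))
    (B0 B : 'M[K]_n) :
  X *m (1%:M + a *: B0) = H *m (1%:M - a *: B0) -> (H + X) *m (B - B0) = 0 ->
  X *m (1%:M + a *: B) = H *m (1%:M - a *: B).
Proof.
move=> eq0; rewrite mulmxDl !mulmxBr => ker.
move: eq0; rewrite !mulmxDr !mulmxN !mulmx1 -!scalemxAr => eq0.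
have -> : X *m B = X *m B0 + (H *m B0 - H *m B).
  by apply/eqP; rewrite -subr_eq0 -ker opprD opprB addrA addrC.
by rewrite scalerDr addrA eq0 scalerBr addrA subrK.
Qed.

Section ComplexMatrices.
Variable R : realType.
Local Notation C := R[i].

Lemma conjTD m n (A B : 'M[C]_(m, n)) : conjT (A + B) = conjT A + conjT B.
Proof. by rewrite /conjT map_mxD raddfD. Qed.

Lemma conjTM m n p (A : 'M[C]_(m, n)) (B : 'M[C]_(n, p)) :
  conjT (A *m B) = conjT B *m conjT A.
Proof. by rewrite /conjT map_mxM trmx_mul. Qed.

Lemma conjTK m n (A : 'M[C]_(m, n)) : conjT (conjT A) = A.
Proof. by apply/matrixP => i j; rewrite !mxE conjcK. Qed.

Lemma conjT_cplx m n (A : 'M[R]_(m, n)) : conjT (cplx_mx A) = cplx_mx A^T.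
Proof. by apply/matrixP => i j; rewrite !mxE conjc_real. Qed.

Lemma Re_cplx_mulmx m n p (A : 'M[R]_(m, n)) (W : 'M[C]_(n, p)) :
  map_mx (@complex.Re R) (cplx_mx A *m W) = A *m map_mx (@complex.Re R) W.
Proof.
apply/matrixP => i k; rewrite !mxE raddf_sum; apply: eq_bigr => j _.
by rewrite !mxE; case: (W j k) => a b /=; rewrite mul0r subr0.
Qed.

Lemma Im_cplx_mulmx m n p (A : 'M[R]_(m, n)) (W : 'M[C]_(n, p)) :
  map_mx (@complex.Im R) (cplx_mx A *m W) = A *m map_mx (@complex.Im R) W.
Proof.
apply/matrixP => i k; rewrite !mxE raddf_sum; apply: eq_bigr => j _.
by rewrite !mxE; case: (W j k) => a b /=; rewrite mul0r addr0.
Qed.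

Lemma cplx_mx_eq0 m n (W : 'M[C]_(m, n)) :
  map_mx (@complex.Re R) W = 0 -> map_mx (@complex.Im R) W = 0 -> W = 0.
Proof.
move=> /matrixP ReW /matrixP ImW; apply/matrixP => i j.
have := ReW i j; have := ImW i j; rewrite !mxE.
by case: (W i j) => a b /= -> ->.
Qed.

Lemma unitmx_1_add_iZ n (c : R) (B : 'M[R]_n) :
  B^T = B -> 1%:M + ('i%C * c%:C%C) *: cplx_mx B \in unitmx.
Proof.
move=> symB; set X := _ *: cplx_mx B.
have sqrB : (c *: B) *m (c *: B)^T = (c ^+ 2) *: (B *m B).
  by rewrite linearZ /= symB -scalemxAl -scalemxAr scalerA expr2.
have sqrX : X *m X = - cplx_mx ((c ^+ 2) *: (B *m B)).
  rewrite /X -scalemxAl -scalemxAr scalerA /cplx_mx map_mxZ map_mxM -scaleNr.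
  by congr (_ *: _); rewrite mulrACA -expr2 sqr_i mulN1r rmorphXn.
have factor : (1%:M + X) *m (1%:M - X) = cplx_mx (1%:M + (c *: B) *m (c *: B)^T).
  rewrite mulmxDl !mulmxBr !mul1mx mulmx1 addrA subrK sqrX opprK sqrB.
  by rewrite /cplx_mx map_mxD map_mx1.
have := unitmx_1_add_mul_tr (c *: B); rewrite -(map_unitmx (real_complex R)).
by rewrite -[map_mx _ _]/(cplx_mx _) -factor unitmx_mul => /andP[].
Qed.

Lemma ThetaE n (Z0 : R) (B : 'M[R]_n) : B^T = B ->
  Theta Z0 B = (1%:M - ('i%C * Z0%:C%C) *: cplx_mx B) *m
               invmx (1%:M + ('i%C * Z0%:C%C) *: cplx_mx B).
Proof.
move=> symB; apply: invmx_comm; first exact: unitmx_1_add_iZ.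
set X := _ *: cplx_mx B.
rewrite mulmxDl mulmxBl !mulmxBr !mulmxDr !mul1mx !mulmx1.
by rewrite addrA subrK opprD addrA addrK.
Qed.

Lemma mulmx_ThetaP m n {Z0 : R} {B : 'M[R]_n} {H X : 'M[C]_(m, n)} : B^T = B ->
  H *m Theta Z0 B = X <->
  X *m (1%:M + ('i%C * Z0%:C%C) *: cplx_mx B) =
  H *m (1%:M - ('i%C * Z0%:C%C) *: cplx_mx B).
Proof.
move=> symB; have unit_P := unitmx_1_add_iZ Z0 symB.
rewrite ThetaE // mulmxA; split=> [<-|<-]; [exact: mulmxKV | exact: mulmxK].
Qed.

Lemma M_U_kernel NI S (Z0 : R) (Hr : 'M[C]_(S, NI)) (U : 'M[C]_(NI, S))
    (D : 'M[R]_NI) :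
  Z0 != 0 -> D^T = D -> D *m M_U Z0 Hr U = 0 -> (Hr + conjT U) *m cplx_mx D = 0.
Proof.
move=> Z0_neq0 symD; rewrite /M_U mul_mx_row => /eqP.
rewrite row_mx_eq0 => /andP[/eqP DRe /eqP DIm].
have a_neq0 : 'i%C * Z0%:C%C != 0 :> C.
  by rewrite mulf_neq0 // eq_complex /= ?oner_eq0 ?andbF ?eqxx ?andbT.
have : cplx_mx D *m (conjT Hr + U) = 0.
  apply: (scalemx_inj a_neq0); rewrite scaler0 scalemxAr.
  by apply: cplx_mx_eq0; rewrite ?Re_cplx_mulmx ?Im_cplx_mulmx.
move/(congr1 (@conjT R _ _)); rewrite conjTM conjTD conjTK conjT_cplx symD => ->.
by apply/matrixP => i j; rewrite !mxE conjc0.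
Qed.

Lemma U_G_of_nonsingular NI S (e : rel 'I_NI) (Z0 : R) (Hr : 'M[C]_(S, NI))
    (U : 'M[C]_(NI, S)) :
  Z0 != 0 -> (0 < S + S)%N -> symmetric e ->
  upper_degrees_up_to_perm R e (minn (S + S) NI).-1 ->
  U_fully Z0 Hr U ->
  ((S + S <= NI)%N -> forall f : 'I_(S + S) -> 'I_NI, injective f ->
     \det (mxsub f id (M_U Z0 Hr U)) != 0) ->
  U_G e Z0 Hr U.
Proof.
move=> Z0_neq0 S_gt0 e_sym degs [B0 [symB0 ->]] nsing.
have [B [symB [B_BG BM]]] := sparse_sym_mulmx_eq_perm S_gt0 e_sym symB0 degs nsing.
have symD : (B - B0)^T = B - B0 by rewrite linearB /= symB symB0.
have ker : (B - B0) *m M_U Z0 Hr (conjT (Hr *m Theta Z0 B0)) = 0.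
  by rewrite mulmxBl BM subrr.
suff <- : Hr *m Theta Z0 B = Hr *m Theta Z0 B0 by exists B.
apply/(mulmx_ThetaP symB).
apply: (cayley_shift (B0 := cplx_mx B0)); first exact/(mulmx_ThetaP symB0).
by move: (M_U_kernel Z0_neq0 symD ker); rewrite conjTK /cplx_mx map_mxB.
Qed.

End ComplexMatrices.

Lemma Hset_or (R : realType) NI NT S (Hd : 'M[R[i]]_(S, NT)) (G : 'M[R[i]]_(NI, NT))
    (P Q1 Q2 : 'M[R[i]]_(NI, S) -> Prop) :
  (forall U, P U <-> Q1 U \/ Q2 U) ->
  forall H, Hset Hd G P H <-> Hset Hd G Q1 H \/ Hset Hd G Q2 H.
Proof.
move=> PQ H; split=> [[U [/PQ[Q1U|Q2U] ->]]|[[U [QU ->]]|[U [QU ->]]]].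
- by left; exists U.
- by right; exists U.
- by exists U; split=> //; apply/PQ; left.
- by exists U; split=> //; apply/PQ; right.
Qed.

Theorem theorem2 (R : realType) (NI NT K : nat) (N : 'I_K -> nat) (Z0 : R)
    (Hdk : forall k : 'I_K, 'M[R[i]]_(N k, NT))
    (Hrk : forall k : 'I_K, 'M[R[i]]_(N k, NI))
    (G : 'M[R[i]]_(NI, NT))
    (e : rel 'I_NI) :
  (0 < NI)%N -> (0 < NT)%N -> (0 < K)%N -> (forall k, 0 < N k)%N -> 0 < Z0 ->
  (* D = min(sum_k N_k, N_T) equals sum_k N_k *)
  (\sum_(k < K) N k <= NT)%N ->
  (* e is a simple undirected graph on V_1..V_{N_I} *)
  symmetric e -> irreflexive e ->
  (* 2L = min(2D, N_I), with D = sum_k N_k and L = min(D, N_I/2) *)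
  (exists (s : 'S_NI) (Abar : 'M[R]_NI),
      adjmx R e = perm_mx s *m Abar *m (perm_mx s)^T /\
      forall n : 'I_NI, (n.+1 <= NI - 1)%N ->
        \sum_(m : 'I_NI | (n < m)%N) Abar n m
          = (minn (minn (2 * \sum_(k < K) N k) NI).-1 (NI - n.+1))%:R) ->
  let S := (\sum_(k < K) N k)%N in
  let Hd := stack Hdk in
  let Hr := stack Hrk in
  (forall U : 'M[R[i]]_(NI, S),
     U_fully Z0 Hr U <-> U_G e Z0 Hr U \/ N_U Z0 Hr U) /\
  (forall H : 'M[R[i]]_(S, NT),
     Hset Hd G (U_fully Z0 Hr) H <->
       Hset Hd G (U_G e Z0 Hr) H \/ Hset Hd G (N_U Z0 Hr) H).
Proof.
(* [D = \sum_k N_k] only enters through [2L = min(2D, N_I)] in the degree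
   hypothesis. *)
move=> _ _ K_gt0 N_gt0 Z0_gt0 _ e_sym _ degs S Hd Hr.
have S_gt0 : (0 < S + S)%N.
  rewrite addn_gt0 orbb /S (bigD1 (Ordinal K_gt0)) //=.
  exact: leq_trans (N_gt0 _) (leq_addr _ _).
have degs2 : upper_degrees_up_to_perm R e (minn (S + S) NI).-1.
  by rewrite addnn -mul2n.
have decomp U : U_fully Z0 Hr U <-> U_G e Z0 Hr U \/ N_U Z0 Hr U.
  split=> [fullU|[[B [symB [_ ->]]]|[]//]]; last by exists B.
  have [sing|nsing] := classic (has_singular_submx (S + S) (M_U Z0 Hr U)).
    by right.
  left; apply: U_G_of_nonsingular fullU _ => //; first by rewrite gt_eqF.
  move=> _ f f_inj; apply/eqP => det0; apply: nsing.
  exists (S + S); split=> //; exists f, id.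
  by split; [exact: f_inj | split; [exact: inj_id | exact: det0]].
by split=> //; exact: Hset_or.
Qed.
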